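(* Let $p$ be an odd prime. Then $$\sum_{t=0}^{(p-1)/2}(-1)^t\left[\binom{\frac{p-1}{2}+t}{t}-\binom{p+\frac{p-1}{2}+t}{p+t}\right]\binom{-\frac12}{t}^2\equiv0\pmod{p^2}.$$
   Context: For a rational number $x$ and integer $t\ge0$, $\binom{x}{t}=\frac{x(x-1)\cdots(x-t+1)}{t!}$; in particular $\binom{-1/2}{t}$ is a rational number whose denominator is a power of $2$. For rationals $a,b$ whose denominators are prime to $p$, $a\equiv b\pmod{p^k}$ means that $(a-b)/p^k$ is a rational number with denominator prime to $p$. *)

From HB Require Import structures.
From mathcomp Require Import all_boot all_order all_algebra.
Set Implicit Arguments. Unset Strict Implicit. Unset Printing Implicit Defensive.
Import Order.TTheory GRing.Theory Num.Theory.
Local Open Scope ring_scope.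

Definition ratbin (x : rat) (t : nat) : rat :=
  (\prod_(i < t) (x - (i : nat)%:R)) / (t`!)%:R.

(* a = b (mod p^k) for rationals: (a - b)/p^k has denominator prime to p. *)
Definition rat_congr (p k : nat) (a b : rat) : Prop :=
  coprime `|denq ((a - b) / ((p ^ k)%N)%:R)|%N p.

From HB Require Import structures.
From mathcomp Require Import all_boot all_order all_algebra.
From mathcomp Require Import ring zify.
Set Implicit Arguments. Unset Strict Implicit. Unset Printing Implicit Defensive.
Import Order.TTheory GRing.Theory Num.Theory.
Local Open Scope ring_scope.

(* Let n = (p-1)/2 and H(y) = \sum_t (-1)^t C(n,t)^2 binom(y+t, n).  Since
   -1/2 = n - p/2, binom(-1/2, t) = C(n, t) mod p, and C(n+t+p, n) = C(n+t, n)
   mod p; the product of these two congruences shows that the sum equals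
   H(n) - H(n+p) mod p^2.  The reflection y -> -1-y fixes H and sends n to
   n - p, so the second difference H(n+p) - 2H(n) + H(n-p) = H(n+p) - H(n),
   which is divisible by p^2 because H is a polynomial with p-integral
   coefficients. *)

Section PIntegral.
Variable p : nat.

Definition p_integral (x : rat) : Prop :=
  exists (a : int) (b : nat), [/\ (0 < b)%N, coprime b p & x = a%:~R / b%:R].

Lemma p_integral_int (z : int) : p_integral z%:~R.
Proof. by exists z, 1%N; rewrite coprime1n divr1. Qed.

Lemma p_integral_nat (m : nat) : p_integral m%:R.
Proof. by have := p_integral_int m; rewrite pmulrn. Qed.

Lemma p_integralD x y : p_integral x -> p_integral y -> p_integral (x + y).
Proof.
move=> [a [b [b0 cb ->]]] [c [d [d0 cd ->]]].
exists (a * d%:Z + c * b%:Z), (b * d)%N.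
have hb : (b%:R : rat) != 0 by rewrite pnatr_eq0 -lt0n.
have hd : (d%:R : rat) != 0 by rewrite pnatr_eq0 -lt0n.
rewrite muln_gt0 b0 d0 coprimeMl cb cd natrM rmorphD !rmorphM /= !pmulrn.
by split=> //; field; rewrite hb hd.
Qed.

Lemma p_integralM x y : p_integral x -> p_integral y -> p_integral (x * y).
Proof.
move=> [a [b [b0 cb ->]]] [c [d [d0 cd ->]]].
exists (a * c), (b * d)%N.
have hb : (b%:R : rat) != 0 by rewrite pnatr_eq0 -lt0n.
have hd : (d%:R : rat) != 0 by rewrite pnatr_eq0 -lt0n.
rewrite muln_gt0 b0 d0 coprimeMl cb cd natrM rmorphM /=.
by split=> //; field; rewrite hb hd.
Qed.

Lemma p_integralN x : p_integral x -> p_integral (- x).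
Proof. by rewrite -mulN1r; apply: p_integralM; apply: (p_integral_int (-1)). Qed.

Lemma p_integralB x y : p_integral x -> p_integral y -> p_integral (x - y).
Proof. by move=> hx /p_integralN; apply: p_integralD. Qed.

Lemma p_integralX x k : p_integral x -> p_integral (x ^+ k).
Proof.
move=> hx; elim: k => [|k IHk]; first exact: p_integral_nat 1.
by rewrite exprS; apply: p_integralM.
Qed.

Lemma p_integral_invn (m : nat) : (0 < m)%N -> coprime m p -> p_integral m%:R^-1.
Proof. by move=> m0 cm; exists 1, m; rewrite div1r. Qed.

Lemma coprime_denq_p_integral x : p_integral x -> coprime `|denq x| p.
Proof.
move=> [a [b [b0 cb ex]]]; apply: coprime_dvdl cb.
have hb : (b%:R : rat) != 0 by rewrite pnatr_eq0 -lt0n.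
have e_int : numq x * b%:Z = a * denq x.
  apply/eqP; rewrite -(eqr_int rat) !rmorphM /= numqE ex pmulrn.
  by apply/eqP; field; rewrite hb.
have e_nat : (`|numq x| * b = `|a| * `|denq x|)%N.
  by rewrite -[b in LHS]absz_nat -!abszM e_int.
have : (`|denq x| %| `|numq x| * b)%N by rewrite e_nat dvdn_mull.
by rewrite Gauss_dvdr // coprime_sym coprime_num_den.
Qed.

End PIntegral.

Ltac p_integral_tac := repeat first [ assumption | apply: p_integralD
  | apply: p_integralB | apply: p_integralM | apply: p_integralN
  | apply: p_integralX | apply: p_integral_nat | apply: p_integral_int
  | exact: (p_integral_nat _ 1) ].

Section PMultiple.
Variable p : nat.

Definition p_multiple (k : nat) (x : rat) : Prop :=
  exists2 r, p_integral p r & x = p%:R ^+ k * r.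

Lemma p_multiple_integral k x : p_multiple k x -> p_integral p x.
Proof. by move=> [r hr ->]; p_integral_tac. Qed.

Lemma p_multiple_p : p_multiple 1 p%:R.
Proof. by exists 1; rewrite ?mulr1 //; apply: (p_integral_nat _ 1). Qed.

Lemma p_multiple0 k : p_multiple k 0.
Proof. by exists 0; rewrite ?mulr0 //; apply: (p_integral_nat _ 0). Qed.

Lemma p_multipleD k x y : p_multiple k x -> p_multiple k y -> p_multiple k (x + y).
Proof. by move=> [r hr ->] [s hs ->]; exists (r + s); rewrite ?mulrDr //; p_integral_tac. Qed.

Lemma p_multipleB k x y : p_multiple k x -> p_multiple k y -> p_multiple k (x - y).
Proof. by move=> [r hr ->] [s hs ->]; exists (r - s); rewrite ?mulrBr //; p_integral_tac. Qed.

Lemma p_multipleMl k x y : p_integral p x -> p_multiple k y -> p_multiple k (x * y).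
Proof. by move=> hx [r hr ->]; exists (x * r); [p_integral_tac | ring]. Qed.

Lemma p_multipleMr k x y : p_multiple k x -> p_integral p y -> p_multiple k (x * y).
Proof. by rewrite mulrC => hx hy; apply: p_multipleMl. Qed.

Lemma p_multipleM k l x y :
  p_multiple k x -> p_multiple l y -> p_multiple (k + l) (x * y).
Proof. by move=> [r hr ->] [s hs ->]; exists (r * s); [p_integral_tac | rewrite exprD; ring]. Qed.

Lemma p_multiple_sum k I (r : seq I) (P : pred I) (F : I -> rat) :
  (forall i, P i -> p_multiple k (F i)) -> p_multiple k (\sum_(i <- r | P i) F i).
Proof. by move=> hF; apply: big_ind => //; [apply: p_multiple0 | apply: p_multipleD]. Qed.

Lemma rat_congr_p_multiple k x : (0 < p)%N -> p_multiple k x -> rat_congr p k x 0.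
Proof.
move=> p0 [r hr ->]; rewrite /rat_congr subr0 natrX [_ * r]mulrC mulfK.
  exact: coprime_denq_p_integral.
by rewrite expf_eq0 pnatr_eq0 gtn_eqF ?andbF.
Qed.

(* (a, b, c) behaves like (f(x - h), f(x), f(x + h)) for f a polynomial with
   p-integral coefficients and h in pZ_(p): the first difference lies in pZ_(p)
   and the second difference in p^2Z_(p). *)
Definition p_triple (a b c : rat) : Prop :=
  [/\ p_integral p b, p_multiple 1 (c - b) & p_multiple 2 (a + c - b *+ 2)].

Lemma p_triple_cst c : p_integral p c -> p_triple c c c.
Proof. by move=> hc; split; rewrite // subrr; apply: p_multiple0. Qed.

Lemma p_triple_shift x h : p_integral p x -> p_multiple 1 h -> p_triple (x - h) x (x + h).
Proof.
move=> hx hh; split=> //; first by rewrite addrC addKr.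
by rewrite (_ : _ - _ = 0); [apply: p_multiple0 | ring].
Qed.

Lemma p_tripleD a b c a' b' c' :
  p_triple a b c -> p_triple a' b' c' -> p_triple (a + a') (b + b') (c + c').
Proof.
move=> [hb hu hv] [hb' hu' hv']; split; first by p_integral_tac.
  by rewrite (_ : _ - _ = (c - b) + (c' - b')); [apply: p_multipleD | ring].
rewrite (_ : _ - _ = (a + c - b *+ 2) + (a' + c' - b' *+ 2)); last by ring.
exact: p_multipleD.
Qed.

Lemma p_triple_left a b c : p_triple a b c -> p_multiple 1 (a - b).
Proof.
move=> [_ hu [r hr ev]]; rewrite (_ : a - b = (a + c - b *+ 2) - (c - b)); last by ring.
by apply: p_multipleB hu; rewrite ev; exists (p%:R * r); [p_integral_tac | ring].
Qed.

Lemma p_tripleM a b c a' b' c' :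
  p_triple a b c -> p_triple a' b' c' -> p_triple (a * a') (b * b') (c * c').
Proof.
move=> /[dup] /p_triple_left hw [hb hu hv] /[dup] /p_triple_left hw' [hb' hu' hv'].
split; first by p_integral_tac.
  rewrite (_ : _ - _ = (c - b) * (b' + (c' - b')) + b * (c' - b')); last by ring.
  apply: p_multipleD; last exact: p_multipleMl.
  by apply: p_multipleMr => //; apply: p_integralD => //; apply: p_multiple_integral hu'.
rewrite (_ : _ - _ = (a - b) * (a' - b') + (c - b) * (c' - b')
  + b * (a' + c' - b' *+ 2) + b' * (a + c - b *+ 2)); last by ring.
apply: p_multipleD; last exact: p_multipleMl.
apply: p_multipleD; last exact: p_multipleMl.
by apply: p_multipleD; apply: (@p_multipleM 1 1).
Qed.

Lemma p_triple_eq_left b c : p_triple b b c -> p_multiple 2 (c - b).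
Proof. by case=> _ _; rewrite (_ : b + c - b *+ 2 = c - b) //; ring. Qed.

Lemma p_triple_sum I (r : seq I) (P : pred I) (A B C : I -> rat) :
  (forall i, P i -> p_triple (A i) (B i) (C i)) ->
  p_triple (\sum_(i <- r | P i) A i) (\sum_(i <- r | P i) B i) (\sum_(i <- r | P i) C i).
Proof.
move=> h; apply: (big_ind3 p_triple) => //; last exact: p_tripleD.
exact/p_triple_cst/(p_integral_nat _ 0).
Qed.

Lemma p_triple_prod I (r : seq I) (P : pred I) (A B C : I -> rat) :
  (forall i, P i -> p_triple (A i) (B i) (C i)) ->
  p_triple (\prod_(i <- r | P i) A i) (\prod_(i <- r | P i) B i) (\prod_(i <- r | P i) C i).
Proof.
move=> h; apply: (big_ind3 p_triple) => //; last exact: p_tripleM.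
exact/p_triple_cst/(p_integral_nat _ 1).
Qed.

End PMultiple.

Lemma ratbinS x k : ratbin x k.+1 = ratbin x k * (x - k%:R) / k.+1%:R.
Proof.
rewrite /ratbin big_ord_recr factS natrM /=.
have hk : (k`!%:R : rat) != 0 by rewrite pnatr_eq0 -lt0n fact_gt0.
by field; rewrite hk andbT addrC natr1 pnatr_eq0.
Qed.

Lemma ratbin_nat (N k : nat) : ratbin N%:R k = 'C(N, k)%:R.
Proof.
elim: k => [|k IHk]; first by rewrite /ratbin big_ord0 bin0 fact0 divr1.
rewrite ratbinS IHk.
have hk : (k.+1%:R : rat) != 0 by rewrite pnatr_eq0.
case: (leqP k N) => hkN; last by rewrite !bin_small ?mul0r // ltnW.
apply: (mulIf hk); rewrite mulfVK // -natrB // -!natrM.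
by rewrite mulnC -mul_bin_left mulnC.
Qed.

Lemma ratbin_reflect z n : ratbin (-1 - z) n = (-1) ^+ n * ratbin (z + n%:R) n.
Proof.
rewrite /ratbin mulrA; congr (_ / _).
have -> : \prod_(i < n) (-1 - z - i%:R) = \prod_(i < n) (-1 * (z + 1 + i%:R)).
  by apply: eq_bigr => i _; ring.
rewrite big_split /= prodr_const card_ord; congr (_ * _).
rewrite (reindex_inj rev_ord_inj) /=; apply: eq_bigr => i _.
by rewrite natrB ?ltn_ord // -[i.+1]addn1 natrD; ring.
Qed.

Lemma p_triple_ratbin p k x h : coprime k`! p -> p_integral p x -> p_multiple p 1 h ->
  p_triple p (ratbin (x - h) k) (ratbin x k) (ratbin (x + h) k).
Proof.
move=> hk hx hh; apply: p_tripleM; last first.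
  by apply/p_triple_cst/p_integral_invn => //; apply: fact_gt0.
have shift e : \prod_(i < k) (x + e - i%:R) = \prod_(i < k) (x - i%:R + e).
  by apply: eq_bigr => i _; ring.
rewrite /ratbin !shift.
by apply: p_triple_prod => i _; apply: p_triple_shift => //; p_integral_tac.
Qed.

Lemma bin_add_sym m k : 'C(m + k, k) = 'C(m + k, m).
Proof. by rewrite -bin_sub ?leq_addl // addnK. Qed.

Lemma coprime_fact_prime p t : prime p -> (t < p)%N -> coprime t`! p.
Proof.
move=> hp; elim: t => [|t IHt] ht; first by rewrite fact0 coprime1n.
rewrite factS coprimeMl IHt ?(ltnW ht) // andbT coprime_sym prime_coprime //.
by apply/negP => /(dvdn_leq (ltn0Sn t)); rewrite leqNgt ht.
Qed.

Definition sym_sum (n : nat) (y : rat) : rat :=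
  \sum_(t < n.+1) (-1) ^+ t * 'C(n, t)%:R ^+ 2 * ratbin (y + t%:R) n.

Lemma sym_sum_reflect n y : sym_sum n (-1 - y) = sym_sum n y.
Proof.
rewrite /sym_sum (reindex_inj rev_ord_inj) /=; apply: eq_bigr => t _.
have ht : (t <= n)%N by rewrite -ltnS ltn_ord.
rewrite subSS bin_sub //.
rewrite (_ : -1 - y + (n - t)%:R = -1 - (y + t%:R - n%:R)); last by rewrite natrB //; ring.
rewrite ratbin_reflect (_ : y + t%:R - n%:R + n%:R = y + t%:R); last by ring.
have sgn m k : (k <= m)%N -> (-1) ^+ (m - k) * (-1) ^+ m = (-1) ^+ k :> rat.
  by move=> hkm; rewrite -{2}(subnK hkm) exprD signrMK.
by rewrite -(sgn n t ht); ring.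
Qed.

Lemma p_triple_sym_sum p n y h : coprime n`! p -> p_integral p y -> p_multiple p 1 h ->
  p_triple p (sym_sum n (y - h)) (sym_sum n y) (sym_sum n (y + h)).
Proof.
move=> hn hy hh; apply: p_triple_sum => t _; apply: p_tripleM.
  by apply: p_triple_cst; p_integral_tac.
have shift e : y + e + t%:R = y + t%:R + e by ring.
rewrite !shift; apply: p_triple_ratbin => //; p_integral_tac.
Qed.

Section OddPrime.
Variables p n : nat.
Hypotheses (hp : prime p) (hpn : p = n.*2.+1).

Lemma natr_p : p%:R = 2 * n%:R + 1 :> rat.
Proof. by rewrite hpn -[n.*2.+1]addn1 natrD -[n.*2]muln2 natrM mulrC. Qed.

Lemma coprime_fact_half t : (t <= n)%N -> coprime t`! p.
Proof. by move=> ht; apply: coprime_fact_prime; rewrite // hpn; lia. Qed.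

(* -1/2 = n - p/2, so binom(-1/2, t) = C(n, t) mod p. *)
Lemma ratbin_half_sqr_congr t : (t <= n)%N ->
  p_multiple p 1 (ratbin (-1 / 2) t ^+ 2 - 'C(n, t)%:R ^+ 2).
Proof.
move=> ht; have hh : p_multiple p 1 (-1 / 2 - n%:R).
  exists (- 2%:R^-1).
    by apply/p_integralN/p_integral_invn; rewrite // coprime2n hpn /= odd_double.
  by rewrite natr_p; field.
have tr := p_triple_ratbin (coprime_fact_half ht) (p_integral_nat _ n) hh.
have [_ hd _] := p_tripleM tr tr.
by rewrite -ratbin_nat !expr2; move: hd; rewrite (_ : n%:R + _ = -1 / 2) //; ring.
Qed.

Lemma sym_sum_shift_congr : p_multiple p 2 (sym_sum n n%:R - sym_sum n (n%:R + p%:R)).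
Proof.
have tr := p_triple_sym_sum (coprime_fact_half (leqnn n)) (p_integral_nat _ n) (p_multiple_p p).
rewrite (_ : n%:R - p%:R = -1 - n%:R) ?sym_sum_reflect in tr; last first.
  by rewrite natr_p; ring.
by rewrite -opprB -mulN1r; apply: p_multipleMl; [p_integral_tac | apply: p_triple_eq_left].
Qed.

Lemma summand_congr t : (t <= n)%N ->
  p_multiple p 2
    ((-1) ^+ t * ('C(n + t, t)%:R - 'C(p + n + t, p + t)%:R) * ratbin (-1 / 2) t ^+ 2
     - ((-1) ^+ t * 'C(n, t)%:R ^+ 2 * ratbin (n%:R + t%:R) n
        - (-1) ^+ t * 'C(n, t)%:R ^+ 2 * ratbin (n%:R + p%:R + t%:R) n)).
Proof.
move=> ht; set B := ratbin (n%:R + t%:R) n; set C := ratbin (n%:R + p%:R + t%:R) n.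
have hCB : p_multiple p 1 (C - B).
  have [_ hd _] := p_triple_ratbin (coprime_fact_half (leqnn n)) (p_integral_nat p (n + t))
    (p_multiple_p p).
  by move: hd; rewrite /B /C natrD addrAC.
rewrite (_ : p + n + t = n + (p + t))%N ?bin_add_sym -?(ratbin_nat _ n); last by lia.
rewrite (_ : _ - _ = - (-1) ^+ t * ((C - B) * (ratbin (-1 / 2) t ^+ 2 - 'C(n, t)%:R ^+ 2)));
  last by rewrite /B /C !natrD addrA; ring.
apply: p_multipleMl; first by p_integral_tac.
by apply: (@p_multipleM _ 1 1) => //; apply: ratbin_half_sqr_congr.
Qed.

End OddPrime.

Theorem lemma2p16 (p : nat) (hp : prime p) (hodd : odd p) :
  rat_congr p 2
    (\sum_(t < (p.-1)./2.+1)
        (-1) ^+ t *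
        (('C((p.-1)./2 + t, t))%:R - ('C(p + (p.-1)./2 + t, p + t))%:R)
        * ratbin (-1 / 2) t ^+ 2)
    0.
Proof.
set n := (p.-1)./2.
have hpn : p = n.*2.+1 by rewrite /n; lia.
apply: rat_congr_p_multiple; first exact: prime_gt0.
rewrite -(subrK (sym_sum n n%:R - sym_sum n (n%:R + p%:R)) (\sum_(t < n.+1) _)).
apply: p_multipleD; last exact: sym_sum_shift_congr.
rewrite /sym_sum -!sumrB; apply: p_multiple_sum => t _.
by apply: summand_congr; rewrite // -ltnS.
Qed.
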